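(* Equip $\mathbb{R}^{1,1}$ with the Minkowski inner product $x\cdot y=-x_0y_0+x_1y_1$. Let $\theta_0,\theta_1,\theta_2\in\mathbb{R}$ with $\theta_0\neq\theta_1$ and $\theta_0\neq\theta_2$, and let $P_i=(\sinh\theta_i,\cosh\theta_i)$ for $i=0,1,2$; these are points on the branch $x_1>0$ of the hyperbola $-x_0^2+x_1^2=1$. Then the chords $P_0P_1$ and $P_0P_2$ are timelike, and the pseudo-angle $\theta$ between them satisfies $$\cosh^2(\theta)=\cosh^2\left(\frac{\theta_1-\theta_2}{2}\right).$$ In particular, $\theta$ does not depend on the position of $P_0$ (i.e. on $\theta_0$).
   Context: A vector $x\in\mathbb{R}^{1,1}$ is timelike if $x\cdot x<0$ and spacelike if $x\cdot x>0$. For two vectors $x,y$ that are both timelike or both spacelike, one has $(x\cdot y)^2\ge (x\cdot x)(y\cdot y)$, and the pseudo-angle $\theta\ge 0$ between them is defined by $\cosh^2(\theta)=\frac{(x\cdot y)^2}{(x\cdot x)(y\cdot y)}$. The pseudo-angle between two chords (line segments) is the pseudo-angle between their direction vectors. *)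

From Stdlib Require Import Reals Lra.
Open Scope R_scope.

Definition mdot (x y : R * R) : R := - (fst x * fst y) + snd x * snd y.

Definition timelike (x : R * R) : Prop := mdot x x < 0.
Definition spacelike (x : R * R) : Prop := mdot x x > 0.

Definition is_pseudo_angle (x y : R * R) (theta : R) : Prop :=
  ((timelike x /\ timelike y) \/ (spacelike x /\ spacelike y)) /\
  0 <= theta /\
  (cosh theta) ^ 2 = (mdot x y) ^ 2 / (mdot x x * mdot y y).

Definition hpt (t : R) : R * R := (sinh t, cosh t).

Definition chord (P Q : R * R) : R * R := (fst Q - fst P, snd Q - snd P).

(** Writing [t1 = m1 + d1], [t0 = m1 - d1] (and likewise for [t2]), the
    sum-to-product formulas show that the chord from [P0] to [Pi] is
    [2 sinh(di)] times the unit timelike vector [(cosh mi, sinh mi)], where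
    [mi = (t0 + ti)/2].  Pseudo-angles are invariant under nonzero rescaling,
    and two unit timelike vectors of this form meet at pseudo-angle
    [|m1 - m2| = |t1 - t2|/2], in which [t0] has cancelled. *)

From Stdlib Require Import Reals Lra.
Open Scope R_scope.

Lemma sinh_opp (x : R) : sinh (- x) = - sinh x.
Proof. unfold sinh; rewrite Ropp_involutive; field. Qed.

Lemma cosh_opp (x : R) : cosh (- x) = cosh x.
Proof. unfold cosh; rewrite Ropp_involutive; field. Qed.

Lemma sinh_add (x y : R) : sinh (x + y) = sinh x * cosh y + cosh x * sinh y.
Proof. unfold sinh, cosh; rewrite Ropp_plus_distr, !exp_plus; field. Qed.

Lemma cosh_add (x y : R) : cosh (x + y) = cosh x * cosh y + sinh x * sinh y.
Proof. unfold sinh, cosh; rewrite Ropp_plus_distr, !exp_plus; field. Qed.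

Lemma cosh_Rabs (x : R) : cosh (Rabs x) = cosh x.
Proof. unfold Rabs; destruct (Rcase_abs x); [apply cosh_opp | reflexivity]. Qed.

Lemma sinh_neq_0 (x : R) : x <> 0 -> sinh x <> 0.
Proof.
  intros Hx Hs; apply Hx.
  rewrite <- (arcsinh_sinh x), Hs, <- sinh_0 at 1; apply arcsinh_sinh.
Qed.

Definition boost (m : R) : R * R := (cosh m, sinh m).

Definition scal (k : R) (x : R * R) : R * R := (k * fst x, k * snd x).

Lemma mdot_scal (k l : R) (x y : R * R) :
  mdot (scal k x) (scal l y) = k * l * mdot x y.
Proof. unfold mdot, scal; simpl; ring. Qed.

Lemma mdot_boost (m n : R) : mdot (boost m) (boost n) = - cosh (m - n).
Proof. unfold mdot, boost, Rminus; simpl; rewrite cosh_add, cosh_opp, sinh_opp; ring. Qed.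

Lemma mdot_boost_diag (m : R) : mdot (boost m) (boost m) = -1.
Proof. rewrite mdot_boost, Rminus_diag, cosh_0; reflexivity. Qed.

Lemma timelike_boost (m : R) : timelike (boost m).
Proof. unfold timelike; rewrite mdot_boost_diag; lra. Qed.

Lemma chord_hpt_sym (m d : R) :
  chord (hpt (m - d)) (hpt (m + d)) = scal (2 * sinh d) (boost m).
Proof.
  unfold chord, hpt, scal, boost, Rminus; simpl.
  rewrite !sinh_add, !cosh_add, sinh_opp, cosh_opp; f_equal; ring.
Qed.

Lemma chord_hpt (a b : R) :
  chord (hpt a) (hpt b) = scal (2 * sinh ((b - a) / 2)) (boost ((a + b) / 2)).
Proof.
  rewrite <- chord_hpt_sym.
  replace ((a + b) / 2 - (b - a) / 2) with a by field.
  replace ((a + b) / 2 + (b - a) / 2) with b by field.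
  reflexivity.
Qed.

Lemma timelike_scal (k : R) (x : R * R) :
  k <> 0 -> timelike (scal k x) <-> timelike x.
Proof.
  intro Hk; unfold timelike; rewrite mdot_scal.
  assert (Hkk : k * k > 0) by (apply Rsqr_pos_lt, Hk).
  split; intro; nra.
Qed.

Lemma spacelike_scal (k : R) (x : R * R) :
  k <> 0 -> spacelike (scal k x) <-> spacelike x.
Proof.
  intro Hk; unfold spacelike; rewrite mdot_scal.
  assert (Hkk : k * k > 0) by (apply Rsqr_pos_lt, Hk).
  split; intro; nra.
Qed.

Lemma is_pseudo_angle_scal (k l : R) (x y : R * R) (theta : R) :
  k <> 0 -> l <> 0 ->
  is_pseudo_angle (scal k x) (scal l y) theta <-> is_pseudo_angle x y theta.
Proof.
  intros Hk Hl; unfold is_pseudo_angle.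
  rewrite (timelike_scal k x Hk), (timelike_scal l y Hl),
    (spacelike_scal k x Hk), (spacelike_scal l y Hl), !mdot_scal.
  assert (Hratio : mdot x x <> 0 -> mdot y y <> 0 ->
    (k * l * mdot x y) ^ 2 / (k * k * mdot x x * (l * l * mdot y y))
    = mdot x y ^ 2 / (mdot x x * mdot y y)) by (intros; field; tauto).
  unfold timelike, spacelike in *.
  split; intros [Hc [Hth Hcosh]]; (split; [exact Hc | split; [exact Hth |]]);
    rewrite Hcosh; [| symmetry]; apply Hratio; destruct Hc; lra.
Qed.

Lemma is_pseudo_angle_boost (m n theta : R) :
  is_pseudo_angle (boost m) (boost n) theta <->
  0 <= theta /\ cosh theta ^ 2 = cosh (m - n) ^ 2.
Proof.
  unfold is_pseudo_angle.
  rewrite mdot_boost, !mdot_boost_diag.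
  replace ((- cosh (m - n)) ^ 2 / (-1 * -1)) with (cosh (m - n) ^ 2) by field.
  pose proof (timelike_boost m); pose proof (timelike_boost n); tauto.
Qed.

Theorem mainTheorem1 (t0 t1 t2 : R) (h01 : t0 <> t1) (h02 : t0 <> t2) :
  timelike (chord (hpt t0) (hpt t1)) /\ timelike (chord (hpt t0) (hpt t2)) /\
  (exists theta, is_pseudo_angle (chord (hpt t0) (hpt t1)) (chord (hpt t0) (hpt t2)) theta) /\
  (forall theta, is_pseudo_angle (chord (hpt t0) (hpt t1)) (chord (hpt t0) (hpt t2)) theta ->
     (cosh theta) ^ 2 = (cosh ((t1 - t2) / 2)) ^ 2).
Proof.
  assert (Hscale : forall t, t0 <> t -> 2 * sinh ((t - t0) / 2) <> 0).
  { intros t Ht; apply Rmult_integral_contrapositive_currified; [lra |].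
    apply sinh_neq_0; lra. }
  assert (Htimelike : forall t, t0 <> t -> timelike (chord (hpt t0) (hpt t))).
  { intros t Ht; rewrite chord_hpt, timelike_scal by auto; apply timelike_boost. }
  assert (Hangle : forall theta,
    is_pseudo_angle (chord (hpt t0) (hpt t1)) (chord (hpt t0) (hpt t2)) theta <->
    0 <= theta /\ cosh theta ^ 2 = cosh ((t1 - t2) / 2) ^ 2).
  { intro theta; rewrite !chord_hpt, is_pseudo_angle_scal, is_pseudo_angle_boost by auto.
    replace ((t0 + t1) / 2 - (t0 + t2) / 2) with ((t1 - t2) / 2) by field; reflexivity. }
  split; [auto |]; split; [auto |]; split.
  - exists (Rabs ((t1 - t2) / 2)); apply Hangle.
    split; [apply Rabs_pos | rewrite cosh_Rabs; reflexivity].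
  - intros theta Htheta; apply Hangle, Htheta.
Qed.
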